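(* Let $\Omega$ be a transitive state space. There exists a basis $\{v_l\}_{l=1}^{N+1}$ of $V$, orthonormal with respect to $\langle\cdot,\cdot\rangle_{GL(\Omega)}$, such that $v_{N+1}=\omega_M$ and, for $x\in V$, $$x\in\mathrm{aff}(\Omega)\iff x=\sum_{l=1}^Na_lv_l+\omega_M\ \text{ for some }a_1,\dots,a_N\in\mathbb R.$$
   Context: $V=\mathbb R^{N+1}$ with Euclidean inner product $(\cdot,\cdot)_E$. A state space $\Omega\subset V$ is a compact convex set with $\mathrm{span}(\Omega)=V$ and $0\notin\mathrm{aff}(\Omega)$ (so $\dim\mathrm{aff}(\Omega)=N$). $GL(\Omega)$ is the compact group of linear bijections $T:V\to V$ with $T(\Omega)=\Omega$, $\mu$ its normalized two-sided Haar measure, and $\langle x,y\rangle_{GL(\Omega)}=\int_{GL(\Omega)}(Tx,Ty)_E\,d\mu(T)$. $\Omega$ is transitive if $GL(\Omega)$ acts transitively on its extreme points; then there is a unique state $\omega_M$ (maximally mixed state) with $T\omega_M=\omega_M$ for all $T\in GL(\Omega)$, and by the standing convention for transitive state spaces $\Omega$ is rescaled so that $(\omega_M,\omega_M)_E=1$. *)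

From HB Require Import structures.
From mathcomp Require Import all_boot all_order all_algebra.
From mathcomp Require Import all_classical all_reals all_analysis.
Set Implicit Arguments. Unset Strict Implicit. Unset Printing Implicit Defensive.
Import Order.TTheory GRing.Theory Num.Theory.
Import numFieldNormedType.Exports.
Local Open Scope classical_set_scope.
Local Open Scope ring_scope.

(* V = R^n represented as column vectors 'cV[R]_n  (n = N+1 in the paper). *)

Definition dotE (R : realType) (n : nat) (x y : 'cV[R]_n) : R :=
  \sum_(i < n) x i 0 * y i 0.

Definition convex_set (R : realType) (n : nat) (S : set 'cV[R]_n) : Prop :=
  forall x y (t : R), S x -> S y -> 0 <= t <= 1 -> S (t *: x + (1 - t) *: y).

Definition lin_span (R : realType) (n : nat) (S : set 'cV[R]_n) : set 'cV[R]_n :=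
  [set x | exists (k : nat) (c : 'I_k -> R) (w : 'I_k -> 'cV[R]_n),
     (forall i, S (w i)) /\ x = \sum_(i < k) c i *: w i].

Definition aff_hull (R : realType) (n : nat) (S : set 'cV[R]_n) : set 'cV[R]_n :=
  [set x | exists (k : nat) (c : 'I_k -> R) (w : 'I_k -> 'cV[R]_n),
     (forall i, S (w i)) /\ \sum_(i < k) c i = 1 /\ x = \sum_(i < k) c i *: w i].

Definition state_space (R : realType) (n : nat) (Om : set 'cV[R]_n) : Prop :=
  compact Om /\ convex_set Om /\ lin_span Om = setT /\ ~ aff_hull Om 0.

Definition GLOm (R : realType) (n : nat) (Om : set 'cV[R]_n) : set 'M[R]_n :=
  [set T | T \in unitmx /\ (fun x => T *m x) @` Om = Om].

Definition extreme_point (R : realType) (n : nat) (Om : set 'cV[R]_n)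
    (x : 'cV[R]_n) : Prop :=
  Om x /\ forall y z (t : R), Om y -> Om z -> 0 < t < 1 ->
    x = t *: y + (1 - t) *: z -> y = z.

Definition transitive_ss (R : realType) (n : nat) (Om : set 'cV[R]_n) : Prop :=
  forall x y, extreme_point Om x -> extreme_point Om y ->
    exists T, GLOm Om T /\ T *m x = y.

(* I is the normalized two-sided Haar integral of the compact group G,
   i.e. a positive, normalized, left- and right-invariant linear functional
   on the continuous real functions on G. *)
Definition haar_integral (R : realType) (n : nat) (G : set 'M[R]_n)
    (I : ('M[R]_n -> R) -> R) : Prop :=
  [/\ (forall f g : 'M[R]_n -> R, {within G, continuous f} -> {within G, continuous g} ->
         I (fun T => f T + g T) = I f + I g),
      (forall (c : R) (f : 'M[R]_n -> R), {within G, continuous f} ->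
         I (fun T => c * f T) = c * I f),
      (forall f : 'M[R]_n -> R, {within G, continuous f} -> (forall T, G T -> 0 <= f T) ->
         0 <= I f),
      I (fun _ => 1) = 1 &
      (forall S (f : 'M[R]_n -> R), G S -> {within G, continuous f} ->
         I (fun T => f (S *m T)) = I f /\ I (fun T => f (T *m S)) = I f)].

Definition haar_inner (R : realType) (n : nat) (I : ('M[R]_n -> R) -> R)
    (x y : 'cV[R]_n) : R :=
  I (fun T => dotE (T *m x) (T *m y)).

From HB Require Import structures.
From mathcomp Require Import all_boot all_order all_algebra.
From mathcomp Require Import all_classical all_reals all_analysis.
From mathcomp Require Import ring lra.
Set Implicit Arguments. Unset Strict Implicit. Unset Printing Implicit Defensive.
Import Order.TTheory GRing.Theory Num.Theory.
Import numFieldNormedType.Exports.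
Local Open Scope classical_set_scope.
Local Open Scope ring_scope.

(* The Haar average <x, y> of the Euclidean product is GL(Omega)-invariant and
   equals x^T A y for the averaged Gram matrix A.  It is positive definite
   because Omega is compact and spanning, so the entries of GL(Omega) are
   bounded and |x|^2 <= C |T x|^2 uniformly in T.  The functional <omM, .>
   attains its maximum and minimum over Omega at extreme points; transitivity
   gives T in GL(Omega) mapping one to the other, and T fixes omM and preserves
   <., .>, so <omM, .> is constant, equal to <omM, omM> = 1, on Omega.  As
   Omega spans V, aff(Omega) is then the hyperplane <omM, .> = 1, and
   Gram-Schmidt completes omM to an orthonormal basis. *)

Section EuclideanProduct.
Variable R : realType.

Lemma dotE_trmx n (x y : 'cV[R]_n) : dotE x y = (x^T *m y) 0 0.
Proof. by rewrite mxE; apply: eq_bigr => i _; rewrite mxE. Qed.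

Lemma bilinear_sumE n (A : 'M[R]_n) (x y : 'cV[R]_n) :
  (x^T *m A *m y) 0 0 = \sum_i \sum_j (x i 0 * y j 0) * A i j.
Proof.
rewrite mxE; under eq_bigr do rewrite mxE mulr_suml.
rewrite exchange_big /=; apply: eq_bigr => i _; apply: eq_bigr => j _.
by rewrite !mxE; ring.
Qed.

Lemma dotE_mulmx n (T : 'M[R]_n) (x y : 'cV[R]_n) :
  dotE (T *m x) (T *m y) = (x^T *m (T^T *m T) *m y) 0 0.
Proof. by rewrite dotE_trmx trmx_mul !mulmxA. Qed.

Lemma dotE_ge0 n (x : 'cV[R]_n) : 0 <= dotE x x.
Proof. by apply: sumr_ge0 => i _; rewrite -expr2 sqr_ge0. Qed.

Lemma dotE_gt0 n (x : 'cV[R]_n) : x != 0 -> 0 < dotE x x.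
Proof.
move=> x0; rewrite lt_neqAle dotE_ge0 andbT eq_sym; apply: contra x0 => /eqP x2_0.
apply/eqP/matrixP => i j; rewrite (ord1 j) mxE; apply/eqP; rewrite -sqrf_eq0.
by apply/eqP/(psumr_eq0P _ x2_0) => // k _; rewrite -expr2 sqr_ge0.
Qed.

Lemma dotE_convex_defect n (y z : 'cV[R]_n) (t : R) :
  t * dotE y y + (1 - t) * dotE z z
    - dotE (t *: y + (1 - t) *: z) (t *: y + (1 - t) *: z)
  = t * (1 - t) * dotE (y - z) (y - z).
Proof.
rewrite /dotE !mulr_sumr -big_split -sumrB /=; apply: eq_bigr => i _.
by rewrite !mxE; ring.
Qed.

End EuclideanProduct.

Section Continuity.
Variable R : realType.

Lemma continuous_sumr (T : topologicalType) (J : Type) (r : seq J)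
    (F : J -> T -> R) :
  (forall j, continuous (F j)) -> continuous (fun t => \sum_(j <- r) F j t).
Proof. by move=> F_cont; apply: continuous_big => //; exact: add_continuous. Qed.

Lemma continuous_mulr (T : topologicalType) (f g : T -> R) :
  continuous f -> continuous g -> continuous (fun t => f t * g t).
Proof. by move=> f_cont g_cont t; apply: continuousM; [exact: f_cont | exact: g_cont]. Qed.

Lemma continuous_dotE n : continuous (fun x : 'cV[R]_n => dotE x x).
Proof.
by apply: continuous_sumr => i; apply: continuous_mulr; exact: coord_continuous.
Qed.

Lemma continuous_gram n (i j : 'I_n) :
  continuous (fun T : 'M[R]_n => (T^T *m T) i j).
Proof.
under eq_fun do rewrite mxE; apply: continuous_sumr => k.
under eq_fun do rewrite mxE.
by apply: continuous_mulr; exact: coord_continuous.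
Qed.

Lemma continuous_dotE_mulmx n (x y : 'cV[R]_n) :
  continuous (fun T : 'M[R]_n => dotE (T *m x) (T *m y)).
Proof.
under eq_fun do rewrite dotE_mulmx bilinear_sumE.
apply: continuous_sumr => i; apply: continuous_sumr => j.
by apply: continuous_mulr; [exact: cst_continuous | exact: continuous_gram].
Qed.

End Continuity.

Section HaarIntegral.
Variables (R : realType) (n : nat) (G : set 'M[R]_n) (I : ('M[R]_n -> R) -> R).
Hypothesis haarI : haar_integral G I.
Implicit Types f g : 'M[R]_n -> R.

Lemma haarD f g : continuous f -> continuous g ->
  I (fun T => f T + g T) = I f + I g.
Proof. by case: haarI => + _ _ _ _ f_cont g_cont; apply; exact: continuous_subspaceT. Qed.

Lemma haarZ (c : R) f : continuous f -> I (fun T => c * f T) = c * I f.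
Proof. by case: haarI => _ + _ _ _ f_cont; apply; exact: continuous_subspaceT. Qed.

Lemma haar_ge0 f : continuous f -> (forall T, G T -> 0 <= f T) -> 0 <= I f.
Proof. by case: haarI => _ _ + _ _ f_cont; apply; exact: continuous_subspaceT. Qed.

Lemma haar_cst (c : R) : I (fun _ => c) = c.
Proof.
case: haarI => _ _ _ haar1 _.
have -> : (fun _ => c) = (fun _ : 'M[R]_n => c * 1) by apply/funext => T; rewrite mulr1.
by rewrite haarZ ?haar1 ?mulr1 //; exact: cst_continuous.
Qed.

Lemma haarB f g : continuous f -> continuous g ->
  I (fun T => f T - g T) = I f - I g.
Proof.
move=> f_cont g_cont; apply/eqP; rewrite eq_sym subr_eq -haarD //.
- by apply/eqP; congr I; apply/funext => T; rewrite subrK.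
- by move=> T; apply: continuousB; [exact: f_cont | exact: g_cont].
Qed.

Lemma haar_le f g : continuous f -> continuous g ->
  (forall T, G T -> f T <= g T) -> I f <= I g.
Proof.
move=> f_cont g_cont le_fg; rewrite -subr_ge0 -haarB //.
apply: haar_ge0 => [T|T GT]; last by rewrite subr_ge0 le_fg.
by apply: continuousB; [exact: g_cont | exact: f_cont].
Qed.

Lemma eq_haar_in f g : continuous f -> continuous g ->
  (forall T, G T -> f T = g T) -> I f = I g.
Proof.
move=> f_cont g_cont eq_fg.
by apply/le_anti; rewrite !haar_le // => T GT; rewrite eq_fg.
Qed.

Lemma haar_sum (J : Type) (r : seq J) (F : J -> 'M[R]_n -> R) :
  (forall j, continuous (F j)) ->
  I (fun T => \sum_(j <- r) F j T) = \sum_(j <- r) I (F j).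
Proof.
move=> F_cont; elim: r => [|j r IHr].
  by under eq_fun do rewrite big_nil; rewrite big_nil haar_cst.
under eq_fun do rewrite big_cons.
by rewrite haarD ?IHr ?big_cons //; exact: continuous_sumr.
Qed.

Lemma haar_mulmxr S f : G S -> continuous f -> I (fun T => f (T *m S)) = I f.
Proof.
case: haarI => _ _ _ _ + GS f_cont => /(_ S f GS) [|_ //].
exact: continuous_subspaceT.
Qed.

Definition haar_gram : 'M[R]_n := \matrix_(i, j) I (fun T => (T^T *m T) i j).

Lemma haar_innerE (x y : 'cV[R]_n) :
  haar_inner I x y = (x^T *m haar_gram *m y) 0 0.
Proof.
rewrite /haar_inner; under eq_fun do rewrite dotE_mulmx bilinear_sumE.
rewrite bilinear_sumE haar_sum => [|i]; last first.
  apply: continuous_sumr => j; apply: continuous_mulr;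
  [exact: cst_continuous | exact: continuous_gram].
apply: eq_bigr => i _; rewrite haar_sum => [|j]; last first.
  by apply: continuous_mulr; [exact: cst_continuous | exact: continuous_gram].
by apply: eq_bigr => j _; rewrite haarZ ?mxE //; exact: continuous_gram.
Qed.

Lemma trmx_haar_gram : haar_gram^T = haar_gram.
Proof.
apply/matrixP => i j; rewrite !mxE; congr I; apply/funext => T.
by rewrite !mxE; apply: eq_bigr => k _; rewrite !mxE mulrC.
Qed.

Lemma haar_inner_mulmx S (x y : 'cV[R]_n) : G S ->
  haar_inner I (S *m x) (S *m y) = haar_inner I x y.
Proof.
move=> GS; rewrite /haar_inner -(haar_mulmxr GS (@continuous_dotE_mulmx _ _ x y)).
by congr I; apply/funext => T; rewrite !mulmxA.
Qed.

Lemma haar_inner_fixed (om : 'cV[R]_n) : (forall T, G T -> T *m om = om) ->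
  haar_inner I om om = dotE om om.
Proof.
move=> om_fixed; rewrite /haar_inner -[RHS]haar_cst.
apply: eq_haar_in => [||T GT]; last by rewrite om_fixed.
- exact: continuous_dotE_mulmx.
- exact: cst_continuous.
Qed.

End HaarIntegral.

Section GLOmBounded.
Variable R : realType.

Lemma sqr_sum_le n (a : 'I_n -> R) :
  (\sum_i a i) ^+ 2 <= n%:R * \sum_i a i ^+ 2.
Proof.
have sqr_sum : (\sum_i a i) ^+ 2 = \sum_i \sum_j a i * a j.
  by rewrite expr2 mulr_suml; under eq_bigr do rewrite mulr_sumr.
have sum_sqr : n%:R * \sum_i a i ^+ 2 = \sum_(i < n) \sum_(j < n) a i ^+ 2.
  by under [RHS]eq_bigr do rewrite sumr_const card_ord; rewrite sumrMnl mulr_natl.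
have : 0 <= \sum_(i < n) \sum_(j < n) (a i - a j) ^+ 2.
  by apply: sumr_ge0 => i _; apply: sumr_ge0 => j _; exact: sqr_ge0.
have -> : \sum_(i < n) \sum_(j < n) (a i - a j) ^+ 2
    = (n%:R * \sum_i a i ^+ 2 - (\sum_i a i) ^+ 2) *+ 2.
  rewrite sqr_sum sum_sqr.
  under eq_bigr do (under eq_bigr do rewrite sqrrB; rewrite big_split sumrB sumrMnl /=).
  rewrite big_split sumrB sumrMnl /= [X in _ + X]exchange_big /=.
  by rewrite mulrnBl mulr2n addrAC.
by rewrite pmulrn_lge0 // subr_ge0.
Qed.

Lemma dotE_mulmx_le n (S : 'M[R]_n) (B : R) (y : 'cV[R]_n) :
  (forall i j, `|S i j| <= B) ->
  dotE (S *m y) (S *m y) <= n%:R ^+ 2 * B ^+ 2 * dotE y y.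
Proof.
move=> S_le; rewrite /dotE; under eq_bigr do rewrite -expr2 mxE.
apply: (@le_trans _ _ (\sum_(j < n) n%:R * \sum_i B ^+ 2 * y i 0 ^+ 2)).
  apply: ler_sum => j _; apply: le_trans (sqr_sum_le _) _.
  apply: ler_wpM2l => //; apply: ler_sum => i _; rewrite exprMn ler_wpM2r ?sqr_ge0 //.
  rewrite -real_normK ?num_real // lerXn2r ?nnegrE //.
  exact: le_trans (normr_ge0 _) (S_le i i).
under [X in _ <= _ * X]eq_bigr do rewrite -expr2.
rewrite sumr_const card_ord -mulr_sumr -mulr_natr le_eqVlt; apply/orP; left.
by apply/eqP; ring.
Qed.

Lemma ler_entry_mx_norm m n (x : 'M[R]_(m, n)) i j : `|x i j| <= `|x|.
Proof.
by change (`|x i j| <= mx_norm x); rewrite mx_normrE; apply/bigmax_geP; right; exists (i, j).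
Qed.

Lemma span_orbit_bounded n (K : set 'cV[R]_n) (M : R) (x : 'cV[R]_n) :
  (forall y, K y -> `|y| <= M) -> lin_span K x ->
  exists b, forall S : 'M[R]_n, (forall y, K y -> K (S *m y)) ->
    forall i, `|(S *m x) i 0| <= b.
Proof.
move=> K_bounded [k [c [w [Kw ->]]]].
exists (\sum_(l < k) `|c l| * M) => S SK i.
rewrite mulmx_sumr summxE (le_trans (ler_norm_sum _ _ _)) //.
apply: ler_sum => l _; rewrite -scalemxAr mxE normrM ler_wpM2l //.
exact: le_trans (ler_entry_mx_norm _ _ _) (K_bounded _ (SK _ (Kw l))).
Qed.

Lemma GLOm_mulmx n (Om : set 'cV[R]_n) T y : GLOm Om T -> Om y -> Om (T *m y).
Proof. by move=> [_ TOm] Omy; rewrite -TOm; exists y. Qed.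

Lemma GLOm_invmx n (Om : set 'cV[R]_n) T : GLOm Om T -> GLOm Om (invmx T).
Proof.
move=> [T_unit TOm]; split; first by rewrite unitmx_inv.
apply/seteqP; split => [_ [y + <-] | z Omz].
  by rewrite -{1}TOm => -[w Omw <-]; rewrite mulKmx.
by exists (T *m z); [rewrite -TOm; exists z | rewrite mulKmx].
Qed.

Lemma GLOm_bounded n (Om : set 'cV[R]_n) : compact Om -> lin_span Om = setT ->
  exists B : R, forall S, GLOm Om S -> forall i j, `|S i j| <= B.
Proof.
move=> Om_compact Om_span.
have [M [_ M_bound]] := compact_bounded Om_compact.
have Om_bounded y : Om y -> `|y| <= `|M| + 1.
  by move=> Omy; apply: M_bound => //; rewrite (le_lt_trans (ler_norm _)) // ltrDl.
have column_bounded j : exists b, forall S, GLOm Om S -> forall i, `|S i j| <= b.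
  have [|b b_bound] := span_orbit_bounded (x := delta_mx j 0 : 'cV[R]_n) Om_bounded.
    by rewrite Om_span.
  exists b => S GS i; have -> : S i j = (S *m (delta_mx j 0 : 'cV[R]_n)) i 0 by rewrite -colE mxE.
  by apply: b_bound => y; exact: GLOm_mulmx.
have [b b_bound] := choice column_bounded.
exists (\sum_j `|b j|) => S GS i j; apply: le_trans (b_bound j S GS i) _.
rewrite (bigD1 j) //= (le_trans (ler_norm _)) // lerDl.
by apply: sumr_ge0 => l _.
Qed.

Lemma haar_inner_gt0 n (Om : set 'cV[R]_n) (I : ('M[R]_n -> R) -> R) x :
  haar_integral (GLOm Om) I -> compact Om -> lin_span Om = setT ->
  x != 0 -> 0 < haar_inner I x x.
Proof.
move=> haarI Om_compact Om_span x_neq0.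
have [B GLOm_le] := GLOm_bounded Om_compact Om_span.
set C := n%:R ^+ 2 * B ^+ 2 + 1.
have C_gt0 : 0 < C by rewrite ltr_pwDr // mulr_ge0 ?sqr_ge0.
apply: (@lt_le_trans _ _ (dotE x x / C)); first by rewrite divr_gt0 ?dotE_gt0.
rewrite -(haar_cst haarI (dotE x x / C)); apply: (haar_le haarI) => [||T GT].
- exact: cst_continuous.
- exact: continuous_dotE_mulmx.
rewrite ler_pdivrMr // -{1 2}(mulKmx (proj1 GT) x).
apply: le_trans (dotE_mulmx_le _ (GLOm_le _ (GLOm_invmx GT))) _.
by rewrite mulrC ler_wpM2l ?dotE_ge0 // lerDl.
Qed.

End GLOmBounded.

Section ExtremePoints.
Variables (R : realType) (n : nat).

Lemma continuous_rowmx (r : 'rV[R]_n) :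
  continuous (fun x : 'cV[R]_n => (r *m x) 0 0).
Proof.
under eq_fun do rewrite mxE; apply: continuous_sumr => j.
by apply: continuous_mulr; [exact: cst_continuous | exact: coord_continuous].
Qed.

(* Among the maximisers of the linear functional, one of maximal Euclidean
   norm is extreme, by strict convexity of the norm. *)
Lemma extreme_argmax (K : set 'cV[R]_n) (r : 'rV[R]_n) :
  compact K -> K !=set0 ->
  exists p, extreme_point K p /\ forall y, K y -> (r *m y) 0 0 <= (r *m p) 0 0.
Proof.
move=> K_compact K_neq0; set f := fun x : 'cV[R]_n => (r *m x) 0 0.
have f_affine y z t : f (t *: y + (1 - t) *: z) = t * f y + (1 - t) * f z.
  by rewrite /f mulmxDr -!scalemxAr !mxE.
have [c Kc c_max] :=
  compact_EVT_max K_neq0 K_compact (continuous_subspaceT (@continuous_rowmx r)).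
have {}c_max y : K y -> f y <= f c by move=> Ky; apply: c_max; rewrite inE.
set F := K `&` f @^-1` [set f c].
have F_compact : compact F.
  apply: compact_closedI => //; apply: preimage_closed; last exact: closed_eq.
  by move=> x _; exact: continuous_rowmx.
have F_neq0 : F !=set0 by exists c; split => //; rewrite inE in Kc.
have [p Fp p_max] :=
  compact_EVT_max F_neq0 F_compact (continuous_subspaceT (@continuous_dotE R n)).
have {}p_max y : F y -> dotE y y <= dotE p p by move=> Fy; apply: p_max; rewrite inE.
have [Kp /= fp] : F p by rewrite inE in Fp.
exists p; split; last by move=> y Ky; change (f y <= f p); rewrite fp; exact: c_max.
split => // y z t Ky Kz /andP[t_gt0 t_lt1] p_eq.
have fy_le := c_max y Ky; have fz_le := c_max z Kz.
have : f p = t * f y + (1 - t) * f z by rewrite p_eq f_affine.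
rewrite fp => fp_eq.
have fy : f y = f c by nra.
have fz : f z = f c by nra.
have yp := p_max y (conj Ky fy); have zp := p_max z (conj Kz fz).
have defect_le0 : t * (1 - t) * dotE (y - z) (y - z) <= 0.
  by rewrite -dotE_convex_defect -p_eq; nra.
apply/eqP; rewrite -subr_eq0; apply/negPn/negP => /dotE_gt0 yz_gt0.
have tt_gt0 : 0 < t * (1 - t) by rewrite mulr_gt0 // subr_gt0.
by have := mulr_gt0 tt_gt0 yz_gt0; rewrite ltNge defect_le0.
Qed.

End ExtremePoints.

Section TransitiveStateSpace.
Variables (R : realType) (n : nat) (Om : set 'cV[R]_n).
Variables (I : ('M[R]_n -> R) -> R) (omM : 'cV[R]_n).
Hypotheses (Om_compact : compact Om) (Om_transitive : transitive_ss Om).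
Hypotheses (haarI : haar_integral (GLOm Om) I) (Om_omM : Om omM).
Hypothesis omM_fixed : forall T, GLOm Om T -> T *m omM = omM.

Lemma haar_inner_fixed_const y : Om y -> haar_inner I omM y = haar_inner I omM omM.
Proof.
move=> Omy; set r := omM^T *m haar_gram I.
have phiE x : haar_inner I omM x = (r *m x) 0 0 by rewrite (haar_innerE haarI).
have phiN x : (- r *m x) 0 0 = - haar_inner I omM x by rewrite phiE mulNmx [LHS]mxE.
have Om_neq0 : Om !=set0 by exists omM.
have [p [p_ext p_max]] := extreme_argmax r Om_compact Om_neq0.
have [q [q_ext q_max]] := extreme_argmax (- r) Om_compact Om_neq0.
have [T [GT Tp]] := Om_transitive p_ext q_ext.
have pq : haar_inner I omM q = haar_inner I omM p.
  by rewrite -Tp -{1}(omM_fixed GT) (haar_inner_mulmx haarI).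
have := q_max y Omy; have := q_max omM Om_omM.
rewrite !phiN !lerN2 pq.
have := p_max y Omy; have := p_max omM Om_omM; rewrite -!phiE.
lra.
Qed.

End TransitiveStateSpace.

Lemma aff_hull_level_set (R : realType) n (S : set 'cV[R]_n) (r : 'rV[R]_n) x :
  lin_span S = setT -> (forall y, S y -> (r *m y) 0 0 = 1) ->
  aff_hull S x <-> (r *m x) 0 0 = 1.
Proof.
move=> S_span r_S.
have r_comb k (c : 'I_k -> R) w : (forall i, S (w i)) ->
    (r *m \sum_(i < k) c i *: w i) 0 0 = \sum_(i < k) c i.
  move=> Sw; rewrite mulmx_sumr summxE; apply: eq_bigr => i _.
  by rewrite -scalemxAr mxE r_S ?mulr1.
split => [[k [c [w [Sw [c_sum1 ->]]]]] | rx1]; first by rewrite (r_comb _ _ _ Sw).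
have : lin_span S x by rewrite S_span.
move=> [k [c [w [Sw x_eq]]]]; exists k, c, w; split => //.
by rewrite -(r_comb _ _ _ Sw) -x_eq.
Qed.

Section OrthonormalCompletion.
Variables (R : rcfType) (n : nat) (A : 'M[R]_n).
Hypothesis A_sym : A^T = A.
Hypothesis A_pos : forall x : 'cV[R]_n, x != 0 -> 0 < (x^T *m A *m x) 0 0.

Lemma orthonormal_rows_extend m (W : 'M[R]_(m, n)) :
  (m < n)%N -> W *m A *m W^T = 1%:M ->
  exists y : 'rV[R]_n, W *m A *m y^T = 0 /\ y *m A *m y^T = 1%:M.
Proof.
move=> lt_mn W_orth.
have /row_subPn [i W_i] : ~~ (1%:M <= W)%MS.
  by rewrite sub1mx; apply: contraL lt_mn => /eqP <-; rewrite -leqNgt rank_leq_row.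
set x := row i (1%:M : 'M[R]_n); set y := x - x *m A *m W^T *m W.
have W_y : W *m A *m y^T = 0.
  rewrite /y linearB /= !trmx_mul !trmxK A_sym mulmxBr !mulmxA W_orth mul1mx.
  by rewrite -!mulmxA subrr.
have y_neq0 : y != 0.
  apply: contra W_i; rewrite subr_eq0 => /eqP x_eq.
  by have : (x <= W)%MS by rewrite x_eq submxMl.
set s := (y *m A *m y^T) 0 0.
have s_gt0 : 0 < s by rewrite /s -{1}[y]trmxK; apply: A_pos; rewrite trmx_eq0.
exists ((Num.sqrt s)^-1 *: y); split; first by rewrite linearZ /= -scalemxAr W_y scaler0.
rewrite linearZ /= -scalemxAr -!scalemxAl; apply/matrixP => a b.
rewrite !ord1 [LHS]mxE [in LHS]mxE -/s mxE eqxx mulrA -expr2 exprVn.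
by rewrite sqr_sqrtr ?ltW // mulVf // gt_eqF.
Qed.

Lemma orthonormal_col_mx m1 m2 (Y : 'M[R]_(m1, n)) (W : 'M[R]_(m2, n)) :
  Y *m A *m Y^T = 1%:M -> W *m A *m W^T = 1%:M -> W *m A *m Y^T = 0 ->
  col_mx Y W *m A *m (col_mx Y W)^T = 1%:M.
Proof.
move=> Y_orth W_orth WY_orth.
have YW_orth : Y *m A *m W^T = 0.
  by apply: trmx_inj; rewrite !trmx_mul trmxK A_sym mulmxA WY_orth trmx0.
rewrite tr_col_mx !mul_col_mx !mul_mx_row Y_orth W_orth WY_orth YW_orth.
by rewrite -block_mxEv [RHS]scalar_mx_block.
Qed.

Lemma orthonormal_rows_completion (u : 'rV[R]_n) m :
  (m < n)%N -> u *m A *m u^T = 1%:M ->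
  exists W : 'M[R]_(m.+1, n), W *m A *m W^T = 1%:M /\ row ord_max W = u.
Proof.
move=> + u_norm1; elim: m => [|m IHm] lt_mn.
  by exists u; split => //; apply/rowP => j; rewrite !mxE; congr (u _ _); exact: val_inj.
have [W [W_orth W_u]] := IHm (ltnW lt_mn).
have [y [Wy_orth y_norm1]] := orthonormal_rows_extend lt_mn W_orth.
exists (col_mx y W); split; first exact: (orthonormal_col_mx y_norm1 W_orth Wy_orth).
have -> : ord_max = rshift 1 (ord_max : 'I_m.+1) by exact: val_inj.
by rewrite -W_u; exact: (@rowKd _ 1 m.+1 n ord_max y W).
Qed.

End OrthonormalCompletion.

Lemma orthonormal_basis_completion (R : rcfType) n (A : 'M[R]_n.+1) (u : 'cV[R]_n.+1) :
  A^T = A -> (forall x : 'cV[R]_n.+1, x != 0 -> 0 < (x^T *m A *m x) 0 0) ->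
  (u^T *m A *m u) 0 0 = 1 ->
  exists v : 'I_n.+1 -> 'cV[R]_n.+1,
    [/\ forall i j, ((v i)^T *m A *m v j) 0 0 = (i == j)%:R, v ord_max = u &
        forall x, x = \sum_l ((v l)^T *m A *m x) 0 0 *: v l].
Proof.
move=> A_sym A_pos u_norm1.
have [|W [W_orth W_u]] := orthonormal_rows_completion A_sym A_pos (u := u^T) (ltnSn n).
  by apply/matrixP => i j; rewrite !ord1 trmxK u_norm1 mxE.
have W_entry i j : (row i W *m A *m (row j W)^T) 0 0 = (W *m A *m W^T) i j.
  by rewrite -row_mul !mxE; apply: eq_bigr => k _; rewrite !mxE.
have [W_unit _] : W \in unitmx /\ (A *m W^T) \in unitmx.
  by apply: mulmx1_unit; rewrite mulmxA.
exists (fun l => (row l W)^T); split => [i j | | x].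
- by rewrite trmxK W_entry W_orth mxE.
- by rewrite W_u trmxK.
have coord : x^T *m invmx W = x^T *m A *m W^T.
  by rewrite -[LHS]mulmx1 -W_orth !mulmxA mulmxKV.
apply: trmx_inj; rewrite -[x^T](mulmxKV W_unit) coord mulmx_sum_row linear_sum.
apply: eq_bigr => l _; rewrite linearZ /= !trmxK; congr (_ *: _).
rewrite -!row_mul [RHS]mxE -[W *m A *m x]trmxK [RHS]mxE.
by rewrite !trmx_mul A_sym mulmxA.
Qed.

Lemma orthonormal_basis_level_set (R : rcfType) n (A : 'M[R]_n.+1)
    (v : 'I_n.+1 -> 'cV[R]_n.+1) x :
  (forall i j, ((v i)^T *m A *m v j) 0 0 = (i == j)%:R) ->
  (forall x, x = \sum_l ((v l)^T *m A *m x) 0 0 *: v l) ->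
  ((v ord_max)^T *m A *m x) 0 0 = 1 <->
  exists a : 'I_n -> R,
    x = \sum_(l < n) a l *: v (widen_ord (leqnSn n) l) + v ord_max.
Proof.
move=> v_orth v_expand; split => [x_level | [a ->]].
  exists (fun l => ((v (widen_ord (leqnSn n) l))^T *m A *m x) 0 0).
  by rewrite {1}[x]v_expand big_ord_recr /= x_level scale1r.
rewrite mulmxDr [LHS]mxE v_orth eqxx mulmx_sumr summxE big1 ?add0r // => l _.
by rewrite -scalemxAr mxE v_orth -val_eqE /= gtn_eqF ?mulr0.
Qed.

Theorem proposition2p12 (R : realType) (N : nat) (Om : set 'cV[R]_N.+1)
    (I : ('M[R]_N.+1 -> R) -> R) (omM : 'cV[R]_N.+1) :
  state_space Om ->
  transitive_ss Om ->
  haar_integral (GLOm Om) I ->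
  Om omM -> (forall T, GLOm Om T -> T *m omM = omM) ->
  dotE omM omM = 1 ->
  exists v : 'I_N.+1 -> 'cV[R]_N.+1,
    [/\ (forall x : 'cV[R]_N.+1, exists a : 'I_N.+1 -> R,
           x = \sum_(l < N.+1) a l *: v l),
        (forall i j, haar_inner I (v i) (v j) = (i == j)%:R),
        v ord_max = omM &
        (forall x : 'cV[R]_N.+1, aff_hull Om x <->
           exists a : 'I_N -> R,
             x = \sum_(l < N) a l *: v (widen_ord (leqnSn N) l) + omM)].
Proof.
move=> [Om_compact [_ [Om_span _]]] Om_transitive haarI Om_omM omM_fixed omM_dot1.
have innerE := haar_innerE haarI.
have gram_pos (x : 'cV[R]_N.+1) : x != 0 -> 0 < (x^T *m haar_gram I *m x) 0 0.
  by move=> x_neq0; rewrite -innerE; exact: haar_inner_gt0 haarI Om_compact Om_span x_neq0.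
have omM_norm : (omM^T *m haar_gram I *m omM) 0 0 = 1.
  by rewrite -innerE (haar_inner_fixed haarI).
have [v [v_orth v_max v_expand]] :=
  orthonormal_basis_completion (trmx_haar_gram I) gram_pos omM_norm.
exists v; split => [x | i j | // | x].
- by exists (fun l => ((v l)^T *m haar_gram I *m x) 0 0); exact: v_expand.
- by rewrite innerE.
rewrite (aff_hull_level_set (r := omM^T *m haar_gram I) _ Om_span) => [|y Omy].
  by rewrite -v_max; exact: orthonormal_basis_level_set.
by rewrite -innerE (haar_inner_fixed_const Om_compact Om_transitive haarI Om_omM omM_fixed Omy) innerE.
Qed.
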